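(* Let $G$ be a finite group of order $mn$ and let $H$ be a (not necessarily normal) subgroup of $G$ of order $n$. Suppose $T=\{D_1,\dots,D_s\}$ is a family of pairwise disjoint $k$-subsets of $G$ such that (i) each $D_i$ is an $(m,n,k,\lambda)$-relative difference set in $G$ relative to $H$, and (ii) $T$ partitions $G\setminus H$. Then $T$ is an $(mn,s,k,s\lambda,0)$-DPDF and an $(mn,s,k,mn-2n-s\lambda,mn-n)$-EPDF in $G$.
   Context: Groups are written multiplicatively with identity $e$; $G^*=G\setminus\{e\}$. For $D\subseteq G$, $\Delta(D)$ is the multiset $\{xy^{-1}: x,y\in D, x\ne y\}$; for $D_1,D_2\subseteq G$, $\Delta(D_1,D_2)$ is the multiset $\{xy^{-1}:x\in D_1,y\in D_2\}$. If $|G|=mn$ and $H$ is a subgroup of order $n$ (here not required to be normal), a $k$-subset $R$ is an $(m,n,k,\lambda)$-relative difference set relative to $H$ if $\Delta(R)$ contains each element of $G\setminus H$ exactly $\lambda$ times and no element of $H\setminus\{e\}$. For a family $A=\{A_1,\dots,A_s\}$ of pairwise disjoint subsets, ${\rm Int}(A)=\bigcup_i\Delta(A_i)$ and ${\rm Ext}(A)=\bigcup_{i\ne j}\Delta(A_i,A_j)$ (multiset unions). For $|G|=v$, a $(v,s,k,\lambda,\mu)$-DPDF is a family of $s$ pairwise disjoint $k$-subsets of $G^*$ with union $S$ such that ${\rm Int}(A)$ contains each element of $S$ exactly $\lambda$ times and each element of $G\setminus(S\cup\{e\})$ exactly $\mu$ times; a $(v,s,k,\lambda,\mu)$-EPDF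 is defined the same way using ${\rm Ext}(A)$. A family partitions a set $X$ if its members are pairwise disjoint with union $X$. *)

From mathcomp Require Import all_boot all_algebra all_fingroup.
Set Implicit Arguments. Unset Strict Implicit. Unset Printing Implicit Defensive.
Import GRing.Theory.

Local Open Scope group_scope.

Section Defs.
Variable gT : finGroupType.

(* multiplicity of g in Delta(A) = { x y^-1 : x, y in A, x <> y } *)
Definition delta_count (A : {set gT}) (g : gT) : nat :=
  #|[set p in setX A A | (p.1 != p.2) && (p.1 * p.2^-1 == g)]|.

(* multiplicity of g in Delta(A,B) = { x y^-1 : x in A, y in B } *)
Definition delta2_count (A B : {set gT}) (g : gT) : nat :=
  #|[set p in setX A B | p.1 * p.2^-1 == g]|.

Definition int_count (s : nat) (D : 'I_s -> {set gT}) (g : gT) : nat :=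
  \sum_(i < s) delta_count (D i) g.

Definition ext_count (s : nat) (D : 'I_s -> {set gT}) (g : gT) : nat :=
  \sum_(i < s) \sum_(j < s | i != j) delta2_count (D i) (D j) g.

Definition pairwise_disjoint (s : nat) (D : 'I_s -> {set gT}) : Prop :=
  forall i j : 'I_s, i != j -> [disjoint D i & D j].

Definition is_RDS (G H : {set gT}) (m n k lam : nat) (R : {set gT}) : Prop :=
  [/\ #|G| = (m * n)%N, #|H| = n, H \subset G, R \subset G & #|R| = k] /\
  (forall g, g \in G :\: H -> delta_count R g = lam) /\
  (forall g, g \in H :\ 1 -> delta_count R g = 0%N).

Definition is_PDF_with (count : gT -> nat) (G : {set gT}) (v s k : nat)
    (lam mu : int) (D : 'I_s -> {set gT}) : Prop :=
  let S := \bigcup_(i < s) D i in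
  [/\ #|G| = v,
      (forall i, D i \subset G :\ 1),
      (forall i, #|D i| = k)
    & pairwise_disjoint D] /\
  (forall g, g \in S -> Posz (count g) = lam) /\
  (forall g, g \in G :\: (S :|: [set 1]) -> Posz (count g) = mu).

Definition is_DPDF (G : {set gT}) (v s k : nat) (lam mu : int)
    (D : 'I_s -> {set gT}) : Prop := is_PDF_with (int_count D) G v k lam mu D.

Definition is_EPDF (G : {set gT}) (v s k : nat) (lam mu : int)
    (D : 'I_s -> {set gT}) : Prop := is_PDF_with (ext_count D) G v k lam mu D.

End Defs.

From mathcomp Require Import all_boot all_algebra all_fingroup.
From mathcomp Require Import zify.

Set Implicit Arguments.
Unset Strict Implicit.
Unset Printing Implicit Defensive.

Local Open Scope group_scope.

(* For g <> 1, Int(T) and Ext(T) together count the pairs (x, y) of elements of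
   S = D_1 u ... u D_s with x y^-1 = g, i.e. the y in S with g y in S.  For
   S = G \ H these are the y in G outside H u g^-1 H, so there are
   |G| - 2|H| + |H n g^-1 H| of them: |G| - 2|H| off H and |G| - |H| on H.
   Int(T) is s lam off H and 0 on H \ {1} since every D_i is a relative
   difference set, and Ext(T) is the difference. *)

Section DifferenceCounts.
Variable gT : finGroupType.
Implicit Types (A B : {set gT}) (g : gT).

Lemma delta2_countE A B g :
  delta2_count A B g = (\sum_y (y \in B) * ((g * y)%g \in A))%N.
Proof.
rewrite /delta2_count.
have -> : [set p in setX A B | p.1 * p.2^-1 == g] =
          (fun y => (g * y, y)) @: [set y in B | g * y \in A].
  apply/setP => -[a b]; rewrite !inE /=; apply/idP/imsetP.
    case/andP=> /andP[aA bB] /eqP <-; exists b; last by rewrite mulgKV.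
    by rewrite inE bB mulgKV.
  by case=> y; rewrite inE => /andP[yB gyA] [-> ->]; rewrite gyA yB mulgK eqxx.
rewrite card_imset; last by move=> x y [].
rewrite -sum1_card big_mkcond /=; apply: eq_bigr => y _.
by rewrite inE mulnb; case: (_ && _).
Qed.

Lemma delta2_count_diag A g :
  delta2_count A A g = (delta_count A g + (g == 1%g) * #|A|)%N.
Proof.
rewrite /delta_count /delta2_count; have [->|ng] := eqVneq g 1.
  have -> : [set p in setX A A | p.1 * p.2^-1 == 1] = (fun y => (y, y)) @: A.
    apply/setP => -[a b]; rewrite !inE /= -eq_mulgV1; apply/idP/imsetP.
      by case/andP => /andP[_ bA] /eqP ->; exists b.
    by case=> y yA [-> ->]; rewrite yA eqxx.
  have -> : [set p in setX A A | (p.1 != p.2) && (p.1 * p.2^-1 == 1)] = set0.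
    by apply/setP => -[a b]; rewrite !inE /= -eq_mulgV1; case: (a == b); rewrite ?andbF.
  by rewrite card_imset ?cards0 ?mul1n // => x y [].
rewrite mul0n addn0; apply: eq_card => -[a b]; rewrite !inE /=.
have [e|] := eqVneq (a * b^-1) g; rewrite ?andbF ?andbT //.
suff -> : a != b by rewrite andbT.
by apply: contraNneq ng => ab; rewrite -e ab mulgV.
Qed.

Lemma sum_mem_disjoint s (D : 'I_s -> {set gT}) x : pairwise_disjoint D ->
  (\sum_(i < s) (x \in D i))%N = (x \in \bigcup_(i < s) D i).
Proof.
move=> disjD; have [/bigcupP[i _ xDi] | xnD] := boolP (x \in \bigcup_(i < s) D i).
  rewrite (bigD1 i) //= xDi big1 // => j ji.
  by rewrite (disjointFr (disjD i j _) xDi) // eq_sym.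
rewrite big1 // => j _; apply/eqP; rewrite eqb0.
by apply: contra xnD => xDj; apply/bigcupP; exists j.
Qed.

Lemma sum_delta2_count_bigcup s (D : 'I_s -> {set gT}) g :
  pairwise_disjoint D ->
  let S := \bigcup_(i < s) D i in
  (\sum_(i < s) \sum_(j < s) delta2_count (D i) (D j) g)%N =
  (\sum_y (y \in S) * ((g * y)%g \in S))%N.
Proof.
move=> disjD /=.
under eq_bigr => i _ do under eq_bigr => j _ do rewrite delta2_countE.
rewrite exchange_big; under eq_bigr => j _ do rewrite exchange_big.
rewrite exchange_big; apply: eq_bigr => y _.
under eq_bigr => j _ do rewrite -big_distrr /= sum_mem_disjoint //.
by rewrite -big_distrl /= sum_mem_disjoint.
Qed.

Lemma ext_add_int_count s (D : 'I_s -> {set gT}) g : g != 1 ->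
  (ext_count D g + int_count D g)%N =
  (\sum_(i < s) \sum_(j < s) delta2_count (D i) (D j) g)%N.
Proof.
move=> ng; rewrite /ext_count /int_count -big_split; apply: eq_bigr => i _ /=.
rewrite [RHS](bigD1 i) //= delta2_count_diag (negbTE ng) mul0n addn0 addnC.
by congr (_ + _)%N; apply: eq_bigl => j; rewrite eq_sym.
Qed.

End DifferenceCounts.

Lemma count_translates_in_setD (gT : finGroupType) (G H : {group gT}) g :
  H \subset G -> g \in G ->
  (\sum_y (y \in G :\: H) * ((g * y)%g \in G :\: H) + 2 * #|H| =
   #|G| + (g \in H) * #|H|)%N.
Proof.
move=> sHG gG; set gH : {set gT} := g^-1 *: H.
have mem_gH y : (y \in gH) = (g * y \in H) by rewrite mem_lcoset invgK.
have -> : (\sum_y (y \in G :\: H) * ((g * y)%g \in G :\: H))%N = #|G :\: (H :|: gH)|.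
  rewrite -sum1_card [RHS]big_mkcond; apply: eq_bigr => y _.
  rewrite !inE mem_gH mulnb (groupMl _ gG).
  by case: (y \in H); case: (g * y \in H); case: (y \in G).
have sHgH_G : H :|: gH \subset G.
  by rewrite subUset sHG -(lcoset_id (groupVr gG)) lcosetS.
have := cardsID (H :|: gH) G; rewrite (setIidPr sHgH_G).
have := cardsUI H gH; rewrite card_lcoset.
have -> : #|H :&: gH| = ((g \in H) * #|H|)%N.
  have [gH_H | gnH] := boolP (g \in H).
    by rewrite mul1n /gH lcoset_id ?groupV // setIid.
  apply/eqP; rewrite mul0n cards_eq0; apply/eqP/setP => y; rewrite !inE mem_gH.
  apply/negbTE; apply: contra gnH => /andP[yH gyH].
  by rewrite -(mulgK y g) groupM ?groupV.
by move=> cardHgH <-; rewrite mul2n -addnn -cardHgH addnCA addnA.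
Qed.

Lemma setD_setDU1 (gT : finGroupType) (G H : {group gT}) :
  H \subset G -> G :\: ((G :\: H) :|: [set 1]) = H :\ 1.
Proof.
move=> sHG; apply/setP => g; rewrite !inE.
have := subsetP sHG g.
by case: (g \in H); case: (g \in G); case: (g == 1) => //= /(_ isT).
Qed.

Section PartitionIntoRDS.
Variables (gT : finGroupType) (G H : {group gT}) (m n k s lam : nat).
Variable D : 'I_s -> {set gT}.
Hypotheses (sHG : H \subset G) (cardG : #|G| = (m * n)%N) (cardH : #|H| = n).
Hypothesis disjD : pairwise_disjoint D.
Hypothesis rdsD : forall i, is_RDS G H m n k lam (D i).
Hypothesis partD : \bigcup_(i < s) D i = G :\: H.

Lemma partition_subset_G1 i : D i \subset G :\ 1.
Proof.
apply/subsetP => x xDi; have : x \in \bigcup_(i < s) D i by apply/bigcupP; exists i.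
by rewrite partD !inE => /andP[xnH ->]; rewrite andbT; apply: contraNneq xnH => ->.
Qed.

Lemma ext_add_int_count_partition g : g \in G -> g != 1 ->
  (ext_count D g + int_count D g + 2 * n = m * n + (g \in H) * n)%N.
Proof.
move=> gG ng; rewrite ext_add_int_count // sum_delta2_count_bigcup //= partD.
by rewrite -cardG -cardH count_translates_in_setD.
Qed.

Lemma int_count_outside g : g \in G :\: H -> int_count D g = (s * lam)%N.
Proof.
move=> gGH; rewrite /int_count (eq_bigr (fun _ => lam)).
  by rewrite sum_nat_const card_ord.
by move=> i _; have [_ [lamD _]] := rdsD i; apply: lamD.
Qed.

Lemma int_count_inside g : g \in H :\ 1 -> int_count D g = 0%N.
Proof.
move=> gH1; rewrite /int_count big1 // => i _.
by have [_ [_ zeroD]] := rdsD i; apply: zeroD.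
Qed.

Lemma ext_count_outside g : g \in G :\: H ->
  Posz (ext_count D g) = ((m * n)%:Z - (2 * n)%:Z - (s * lam)%:Z)%R.
Proof.
move=> gGH; have /setDP[gG gnH] := gGH.
have ng : g != 1 by apply: contraNneq gnH => ->.
have := ext_add_int_count_partition gG ng.
rewrite int_count_outside // (negbTE gnH); lia.
Qed.

Lemma ext_count_inside g : g \in H :\ 1 ->
  Posz (ext_count D g) = ((m * n)%:Z - n%:Z)%R.
Proof.
move=> gH1; have /setD1P[ng gH] := gH1.
have := ext_add_int_count_partition (subsetP sHG g gH) ng.
rewrite int_count_inside // gH; lia.
Qed.

End PartitionIntoRDS.

Theorem mainTheorem7 (gT : finGroupType) (G H : {group gT})
    (m n k s lam : nat) (D : 'I_s -> {set gT}) :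
  H \subset G -> #|G| = (m * n)%N -> #|H| = n ->
  (forall i, D i \subset G) -> (forall i, #|D i| = k) ->
  pairwise_disjoint D ->
  (forall i, is_RDS G H m n k lam (D i)) ->
  \bigcup_(i < s) D i = G :\: H ->
  is_DPDF G (m * n) k (s * lam)%:Z 0 D /\
  is_EPDF G (m * n) k ((m * n)%:Z - (2 * n)%:Z - (s * lam)%:Z)%R
          ((m * n)%:Z - n%:Z)%R D.
Proof.
move=> sHG cardG cardH _ cardD disjD rdsD partD.
have sDG1 := partition_subset_G1 partD.
rewrite /is_DPDF /is_EPDF /is_PDF_with partD setD_setDU1 //.
split; (split; first by []); split.
- by move=> g /(int_count_outside rdsD) ->.
- by move=> g /(int_count_inside rdsD) ->.
- exact: ext_count_outside cardG cardH disjD rdsD partD.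
- exact: ext_count_inside cardG cardH disjD rdsD partD.
Qed.
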